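(* Let $L$ be a Moufang loop such that $x^2\in Z(L)$ for all $x\in L$. Then for all $x,y,z\in L$: (i) $[R_x,R_y]=R_{[x,y]}$; (ii) $[R_y,L_z]=R_{y^{-1},z}=L_{y,z^{-1}}$; (iii) $[[R_x,L_y],R_z]=R_{(x,y,z)}$.
   Context: A Moufang loop is a loop satisfying $x(y(xz))=((xy)x)z$; it is diassociative, so powers, inverses and commutators $[x,y]=x^{-1}y^{-1}xy$ are well defined. The associator is $(x,y,z)=(xy\cdot z)^{-1}(x\cdot yz)$. The center $Z(L)$ consists of all $z$ with $[x,z]=(x,y,z)=(x,z,y)=(z,x,y)=1$ for all $x,y\in L$. Maps act on the right: $yR_x=yx$, $yL_x=xy$, and compositions are read left to right. For permutations, $[A,B]=A^{-1}B^{-1}AB$. The inner maps are $R_{x,y}=R_xR_yR_{xy}^{-1}$ and $L_{x,y}=L_xL_yL_{yx}^{-1}$. *)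

(* A loop: carrier with multiplication, identity and left/right divisions,
   x \ y = ldiv x y  (unique solution z of x*z = y),
   y / x = rdiv y x  (unique solution z of z*x = y). *)
Record loop := Loop {
  carrier :> Type;
  mul : carrier -> carrier -> carrier;
  one : carrier;
  ldiv : carrier -> carrier -> carrier;
  rdiv : carrier -> carrier -> carrier;
  mul1x : forall x, mul one x = x;
  mulx1 : forall x, mul x one = x;
  ldiv_mul : forall x y, ldiv x (mul x y) = y;
  mul_ldiv : forall x y, mul x (ldiv x y) = y;
  rdiv_mul : forall x y, rdiv (mul y x) x = y;
  mul_rdiv : forall x y, mul (rdiv y x) x = y
}.

Arguments mul {l} _ _.
Arguments one {l}.
Arguments ldiv {l} _ _.
Arguments rdiv {l} _ _.

Section LoopDefs.
Variable L : loop.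
Implicit Types x y z w : L.

Definition moufang : Prop :=
  forall x y z : L, mul x (mul y (mul x z)) = mul (mul (mul x y) x) z.

(* inverse: x^{-1} := x \ 1 (two-sided in a Moufang loop) *)
Definition linv x : L := ldiv x one.

(* commutator [x,y] = x^{-1} y^{-1} x y  (well defined by diassociativity) *)
Definition comm x y : L := mul (mul (mul (linv x) (linv y)) x) y.

Definition assoc x y z : L :=
  mul (linv (mul (mul x y) z)) (mul x (mul y z)).

Definition in_center z : Prop :=
  forall x y : L, comm x z = one /\ assoc x y z = one /\
                  assoc x z y = one /\ assoc z x y = one.

(* Maps act on the right; a permutation is represented by its action on
   points, compositions read left to right. *)
Definition R x : L -> L := fun w => mul w x.
Definition Rinv x : L -> L := fun w => rdiv w x.
Definition Lm x : L -> L := fun w => mul x w.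
Definition Linv x : L -> L := fun w => ldiv x w.

Definition seqc (A B : L -> L) : L -> L := fun w => B (A w).

(* permutation commutator [A,B] = A^{-1} B^{-1} A B, given A, B and their
   inverses *)
Definition pcomm (A Ai B Bi : L -> L) : L -> L :=
  seqc (seqc (seqc Ai Bi) A) B.

Definition Rxy x y : L -> L := seqc (seqc (R x) (R y)) (Rinv (mul x y)).
Definition Lxy x y : L -> L := seqc (seqc (Lm x) (Lm y)) (Linv (mul y x)).

End LoopDefs.

(* Write [x,y] and (x,y,z) for the elements with yx = (xy)[x,y] and
   (xy)z = (x(yz))(x,y,z).  As x^-1 = x (x^2)^-1 with (x^2)^-1 central, the
   Moufang identities collapse to x(yz) = (y(xz))[x,y] and
   (zy)x = ((zx)y)[x,y].  Hence commutators and associators are central of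
   order at most 2, the associator is totally symmetric and, by expanding
   k(x(yz)) with the Moufang identity, multiplicative in each argument.  The
   inner mappings of the theorem then send w to w times a commutator or a
   product of associators, which cancels down to the stated one. *)

From Stdlib Require Import Setoid.

Local Infix "*" := mul.
Local Notation "x ^-1" := (linv _ x) (at level 3, left associativity, format "x ^-1").
Local Notation "1" := (@one _).

Record central (L : loop) (c : L) : Prop := Central {
  central_comm : forall a : L, c * a = a * c;
  central_assoc1 : forall a b : L, (c * a) * b = c * (a * b);
  central_assoc2 : forall a b : L, (a * c) * b = a * (c * b);
  central_assoc3 : forall a b : L, (a * b) * c = a * (b * c) }.
Arguments central {L} c.
Arguments central_comm {L c} _ _.
Arguments central_assoc1 {L c} _ _ _.
Arguments central_assoc2 {L c} _ _ _.
Arguments central_assoc3 {L c} _ _ _.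

Lemma pcommE (L : loop) (A Ai B Bi : L -> L) (w : L) :
  pcomm L A Ai B Bi w = B (A (Bi (Ai w))).
Proof. reflexivity. Qed.

Section Loop.
Variable L : loop.
Implicit Types a b c d u w x y z : L.

Lemma mul_cancel_l x y z : x * y = x * z -> y = z.
Proof. intro H. rewrite <- (ldiv_mul L x y), H. apply ldiv_mul. Qed.

Lemma mul_cancel_r x y z : y * x = z * x -> y = z.
Proof. intro H. rewrite <- (rdiv_mul L x y), H. apply rdiv_mul. Qed.

Lemma central_mulAC {c} : central c -> forall a b, (a * c) * b = (a * b) * c.
Proof.
  intros Hc a b. rewrite (central_assoc2 Hc), (central_comm Hc), (central_assoc3 Hc).
  reflexivity.
Qed.

Lemma central_one : central (@one L).
Proof. split; intros; rewrite ?mul1x, ?mulx1; reflexivity. Qed.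

Lemma central_mul c d : central c -> central d -> central (c * d).
Proof.
  intros Hc Hd. split; intros a; [| intros b ..].
  - rewrite (central_assoc1 Hc), (central_comm Hd), <- (central_assoc1 Hc),
      (central_comm Hc), (central_assoc2 Hc). reflexivity.
  - rewrite !(central_assoc1 Hc), (central_assoc1 Hd), <- (central_assoc1 Hc).
    reflexivity.
  - rewrite <- (central_assoc3 Hd a c), (central_assoc2 Hd), (central_assoc2 Hc),
      (central_assoc1 Hc). reflexivity.
  - rewrite <- (central_assoc3 Hd (a * b) c), (central_assoc3 Hc a b),
      (central_assoc3 Hd a (b * c)), (central_assoc3 Hd b c). reflexivity.
Qed.

Definition dcomm x y : L := ldiv (x * y) (y * x).

Definition dassoc x y z : L := ldiv (x * (y * z)) ((x * y) * z).

Lemma mul_dcomm x y : y * x = (x * y) * dcomm x y.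
Proof. symmetry. apply mul_ldiv. Qed.

Lemma mul_dassoc x y z : (x * y) * z = (x * (y * z)) * dassoc x y z.
Proof. symmetry. apply mul_ldiv. Qed.

Lemma dassoc_eq1 x y z : (x * y) * z = x * (y * z) -> dassoc x y z = 1.
Proof.
  intro H. apply (mul_cancel_l (x * (y * z))).
  rewrite <- mul_dassoc, H, mulx1. reflexivity.
Qed.

Lemma central_factor_multiplicative (f g h : L -> L) :
  (forall u, central (f u)) -> (forall u, central (g u)) ->
  f 1 = 1 -> g 1 * g 1 = 1 ->
  (forall y z, (y * z) * f (y * z) = h y * (z * g z)) ->
  forall y z, f (y * z) = f y * f z.
Proof.
  intros Hf Hg f1 g1 Hfg y z.
  assert (Hh : forall u, h u = (u * f u) * g 1).
  { intro u. pose proof (Hfg u 1) as E. rewrite mulx1, mul1x in E.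
    rewrite E, (central_assoc3 (Hg 1)), g1, mulx1. reflexivity. }
  assert (Hgz : f z = g z * g 1).
  { pose proof (Hfg 1 z) as E. rewrite mul1x, Hh, mul1x, f1, mul1x in E.
    rewrite (central_comm (Hg 1)), (central_assoc3 (Hg 1)) in E.
    exact (mul_cancel_l _ _ _ E). }
  pose proof (Hfg y z) as E. rewrite Hh in E.
  rewrite <- (central_assoc3 (Hg z)), (central_mulAC (Hg 1)),
    (central_mulAC (Hf y)), (central_assoc3 (Hg z)), (central_comm (Hg 1)),
    <- Hgz, (central_assoc3 (Hf z)) in E.
  exact (mul_cancel_l _ _ _ E).
Qed.

Section Moufang.
Hypothesis moufangL : moufang L.

Lemma flexible x y : x * (y * x) = (x * y) * x.
Proof. pose proof (moufangL x y 1) as H. rewrite !mulx1 in H. exact H. Qed.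

Lemma mul_alt_l x z : x * (x * z) = (x * x) * z.
Proof. pose proof (moufangL x 1 z) as H. rewrite mul1x, mulx1 in H. exact H. Qed.

Lemma mulmV x : x * x^-1 = 1.
Proof. apply mul_ldiv. Qed.

Lemma mulKm x z : x^-1 * (x * z) = z.
Proof.
  apply (mul_cancel_l x). rewrite (moufangL x (x^-1) z), mulmV, mul1x. reflexivity.
Qed.

Lemma mulVm x : x^-1 * x = 1.
Proof. pose proof (mulKm x 1) as H. rewrite mulx1 in H. exact H. Qed.

Lemma invmK x : x^-1^-1 = x.
Proof. unfold linv at 1. rewrite <- (mulVm x). apply ldiv_mul. Qed.

Lemma mulVKm x z : x * (x^-1 * z) = z.
Proof. pose proof (mulKm (x^-1) z) as H. rewrite invmK in H. exact H. Qed.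

Lemma mulmK u x : (u * x) * x^-1 = u.
Proof.
  pose proof (moufangL x (ldiv x u) (x^-1)) as H.
  rewrite mulmV, mulx1, mul_ldiv in H. symmetry. exact H.
Qed.

Lemma mulmKV u x : (u * x^-1) * x = u.
Proof. pose proof (mulmK u (x^-1)) as H. rewrite invmK in H. exact H. Qed.

Lemma rdivE w x : rdiv w x = w * x^-1.
Proof. rewrite <- (mulmKV w x) at 1. apply rdiv_mul. Qed.

Lemma ldivE x w : ldiv x w = x^-1 * w.
Proof. rewrite <- (mulVKm x w) at 1. apply ldiv_mul. Qed.

Lemma inv_uniq x y : x * y = 1 -> y = x^-1.
Proof. intro H. rewrite <- (mulKm x y), H, mulx1. reflexivity. Qed.

Lemma invmM x y : (x * y)^-1 = y^-1 * x^-1.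
Proof.
  assert (H : (x * y)^-1 * x = y^-1).
  { rewrite <- (mulmK x y) at 2. apply mulKm. }
  rewrite <- H. symmetry. apply mulmK.
Qed.

Lemma moufang_r z x y : ((z * x) * y) * x = z * (x * (y * x)).
Proof.
  pose proof (f_equal (linv L) (moufangL (x^-1) (y^-1) (z^-1))) as H.
  rewrite !invmM, !invmK in H. exact H.
Qed.

Lemma mul_alt_r z x : (z * x) * x = z * (x * x).
Proof. pose proof (moufang_r z x 1) as H. rewrite mulx1, mul1x in H. exact H. Qed.

Lemma moufang_factor x y z : x * (y * z) = ((x * y) * x) * (x^-1 * z).
Proof. rewrite <- (moufangL x y (x^-1 * z)), mulVKm. reflexivity. Qed.

Lemma central_inv c : central c -> central (c^-1).
Proof.
  intro Hc. split; intros a; [| intros b ..]; apply (mul_cancel_l c).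
  - rewrite mulVKm, <- (central_assoc1 Hc a), (central_comm Hc a),
      (central_assoc2 Hc a), mulmV, mulx1. reflexivity.
  - rewrite <- (central_assoc1 Hc (c^-1 * a) b), !mulVKm. reflexivity.
  - rewrite <- (central_assoc1 Hc (a * c^-1) b), <- (central_assoc1 Hc a),
      (central_comm Hc a), (central_assoc2 Hc a), mulmV, mulx1,
      <- (central_assoc1 Hc a (c^-1 * b)), (central_comm Hc a),
      (central_assoc2 Hc a (c^-1 * b)), mulVKm. reflexivity.
  - rewrite <- (central_assoc1 Hc (a * b)), (central_comm Hc (a * b)), mulmK,
      <- (central_assoc1 Hc a), (central_comm Hc a), (central_assoc2 Hc a),
      <- (central_assoc1 Hc b), (central_comm Hc b), mulmK. reflexivity.
Qed.

Lemma assoc_eq1 x y z : assoc L x y z = 1 -> (x * y) * z = x * (y * z).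
Proof. intro H. apply inv_uniq in H. rewrite H, invmK. reflexivity. Qed.

Lemma in_center_central c : in_center L c -> central c.
Proof.
  intro Hc. split; intros a; [| intros b ..]; try (apply assoc_eq1, (Hc a b)).
  (* [a,c] = 1 reassociates to (a^-1 c^-1)(ac) = 1, i.e. ac = (a^-1 c^-1)^-1 = ca. *)
  destruct (Hc a a) as [Hcomm _]. destruct (Hc (a^-1 * c^-1) a) as [_ [Hassoc _]].
  unfold comm in Hcomm. rewrite (assoc_eq1 _ _ _ Hassoc) in Hcomm.
  apply inv_uniq in Hcomm. rewrite Hcomm, invmM, !invmK. reflexivity.
Qed.

Section CentralSquares.
Hypothesis sq_central : forall x : L, in_center L (x * x).

Lemma central_sq x : central (x * x).
Proof. apply in_center_central, sq_central. Qed.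

Lemma central_sq_inv x : central ((x * x)^-1).
Proof. apply central_inv, central_sq. Qed.

Lemma inv_sq x : x^-1 = x * (x * x)^-1.
Proof.
  symmetry. apply inv_uniq. rewrite <- (central_assoc3 (central_sq_inv x)). apply mulmV.
Qed.

Lemma dcommE x y : dcomm x y = (((x * y) * (x * y))^-1 * (x * x)) * (y * y).
Proof.
  (* (xy)((xy)^2)^-1 = (xy)^-1 = y^-1 x^-1, and x^-1 x^2 = x. *)
  unfold dcomm.
  assert (H : (x * y) * ((((x * y) * (x * y))^-1 * (x * x)) * (y * y)) = y * x).
  { rewrite <- (central_assoc3 (central_sq y) (x * y)),
      <- (central_assoc3 (central_sq x) (x * y)), <- (inv_sq (x * y)), invmM,
      (inv_sq x), (inv_sq y), <- (central_assoc3 (central_sq_inv x) (y * (y * y)^-1) x),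
      (central_mulAC (central_sq_inv y) y x),
      (central_assoc3 (central_sq x) ((y * x) * (y * y)^-1) ((x * x)^-1)), mulVm, mulx1,
      (central_assoc3 (central_sq y) (y * x)), mulVm, mulx1.
    reflexivity. }
  rewrite <- H. apply ldiv_mul.
Qed.

Lemma central_dcomm x y : central (dcomm x y).
Proof.
  rewrite dcommE. apply central_mul; [apply central_mul |];
    auto using central_sq, central_sq_inv.
Qed.

Lemma flexible_dcomm x y : (x * y) * x = (y * (x * x)) * dcomm x y.
Proof.
  rewrite <- flexible, (mul_dcomm x y), <- (central_assoc3 (central_dcomm x y) x (x * y)),
    mul_alt_l, (central_comm (central_sq x) y).
  reflexivity.
Qed.

Lemma mul_swap_l x y z : x * (y * z) = (y * (x * z)) * dcomm x y.
Proof.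
  pose proof (moufangL x y (x * z)) as H.
  rewrite (mul_alt_l x z), (central_comm (central_sq x) z),
    <- (central_assoc3 (central_sq x) y z), <- (central_assoc3 (central_sq x) x (y * z)),
    flexible_dcomm, (central_mulAC (central_dcomm x y) (y * (x * x)) (x * z)),
    (central_mulAC (central_sq x) y (x * z)),
    (central_mulAC (central_sq x) (y * (x * z)) (dcomm x y)) in H.
  exact (mul_cancel_r _ _ _ H).
Qed.

Lemma mul_swap_r z x y : (z * y) * x = ((z * x) * y) * dcomm x y.
Proof.
  pose proof (moufang_r (z * x) x y) as H.
  rewrite (mul_alt_r z x), (central_mulAC (central_sq x) z y),
    (central_mulAC (central_sq x) (z * y) x), flexible, flexible_dcomm,
    <- (central_assoc3 (central_dcomm x y) (z * x)),
    <- (central_assoc3 (central_sq x) (z * x) y),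
    (central_mulAC (central_sq x) ((z * x) * y) (dcomm x y)) in H.
  exact (mul_cancel_r _ _ _ H).
Qed.

Lemma dcomm_sq x y : dcomm x y * dcomm x y = 1.
Proof.
  pose proof (mul_swap_l x y 1) as H.
  rewrite !mulx1, (mul_dcomm x y), (central_assoc3 (central_dcomm x y)) in H.
  apply (mul_cancel_l (x * y)). rewrite mulx1. symmetry. exact H.
Qed.

Lemma dcommC x y : dcomm y x = dcomm x y.
Proof.
  apply (mul_cancel_l (y * x)). rewrite <- (mul_dcomm y x).
  pose proof (mul_swap_l x y 1) as H. rewrite !mulx1 in H. exact H.
Qed.

Lemma dcomm_central_r x y c : central c -> dcomm x (y * c) = dcomm x y.
Proof.
  intro Hc. apply (mul_cancel_l (x * (y * c))). rewrite <- (mul_dcomm x (y * c)).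
  rewrite (central_mulAC Hc y x), (mul_dcomm x y), <- (central_assoc3 Hc x y),
    (central_mulAC Hc (x * y) (dcomm x y)).
  reflexivity.
Qed.

Definition central_invol c := central c /\ c * c = 1.

Lemma central_invol_mul c d :
  central_invol c -> central_invol d -> central_invol (c * d).
Proof.
  intros [Hc Hc2] [Hd Hd2]. split; [apply central_mul; assumption |].
  rewrite (central_assoc1 Hc d (c * d)), <- (central_assoc1 Hd c d), (central_comm Hd c),
    (central_assoc3 Hd c d), Hd2, mulx1, Hc2.
  reflexivity.
Qed.

Lemma central_invol_dcomm x y : central_invol (dcomm x y).
Proof. split; [apply central_dcomm | apply dcomm_sq]. Qed.

Lemma dassoc_dcomm x y z :
  dassoc x y z = (dcomm z (x * y) * dcomm z x) * dcomm y z.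
Proof.
  unfold dassoc.
  assert (H : (x * (y * z)) * ((dcomm z (x * y) * dcomm z x) * dcomm y z) = (x * y) * z).
  { rewrite (mul_dcomm z (x * y)), (mul_swap_l z x y), (mul_dcomm y z),
      <- (central_assoc3 (central_dcomm y z) x (y * z)),
      <- (central_assoc3 (central_dcomm y z) (x * (y * z))),
      <- (central_assoc3 (central_dcomm z x) (x * (y * z))),
      (central_mulAC (central_dcomm z (x * y)) (x * (y * z)) (dcomm z x)),
      (central_mulAC (central_dcomm z (x * y)) ((x * (y * z)) * dcomm z x)),
      (central_mulAC (central_dcomm z x) (x * (y * z)) (dcomm y z)).
    reflexivity. }
  rewrite <- H. apply ldiv_mul.
Qed.

Lemma central_invol_dassoc x y z : central_invol (dassoc x y z).
Proof.
  rewrite dassoc_dcomm.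
  apply central_invol_mul; [apply central_invol_mul |]; apply central_invol_dcomm.
Qed.

Lemma central_dassoc x y z : central (dassoc x y z).
Proof. apply central_invol_dassoc. Qed.

Lemma dassoc_sq x y z : dassoc x y z * dassoc x y z = 1.
Proof. apply central_invol_dassoc. Qed.

Lemma dassoc_dcomm' x y z :
  dassoc x y z = (dcomm x y * dcomm x z) * dcomm (y * z) x.
Proof.
  set (k := (dcomm x y * dcomm x z) * dcomm (y * z) x).
  assert (Hk : central_invol k).
  { apply central_invol_mul; [apply central_invol_mul |]; apply central_invol_dcomm. }
  assert (E : x * (y * z) = ((x * y) * z) * k).
  { unfold k. rewrite (mul_dcomm (y * z) x), (mul_swap_r y x z), (mul_dcomm x y),
      (central_mulAC (central_dcomm x y) (x * y) z),
      (central_assoc3 (central_dcomm x z) ((x * y) * z) (dcomm x y)),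
      (central_assoc3 (central_dcomm (y * z) x)).
    reflexivity. }
  assert (Hka : k * dassoc x y z = 1).
  { apply (mul_cancel_l ((x * y) * z)).
    rewrite mulx1, <- (central_assoc3 (central_dassoc x y z)), <- E.
    symmetry. apply mul_dassoc. }
  apply (mul_cancel_l k). rewrite Hka. symmetry. apply Hk.
Qed.

Lemma dassoc_cyc x y z : dassoc x y z = dassoc y z x.
Proof.
  rewrite dassoc_dcomm', dassoc_dcomm, (dcommC x (y * z)), (dcommC x z),
    (central_assoc1 (central_dcomm x (y * z))), (central_comm (central_dcomm x (y * z))).
  reflexivity.
Qed.

Lemma dassoc_swap12 x y z : dassoc x y z = dassoc y x z.
Proof.
  rewrite !dassoc_dcomm, (mul_dcomm x y), (dcomm_central_r _ _ _ (central_dcomm x y)),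
    (dcommC y z), (dcommC x z).
  apply (central_mulAC (central_dcomm x z)).
Qed.

Lemma dassoc_swap23 x y z : dassoc x y z = dassoc x z y.
Proof. rewrite (dassoc_cyc x z y), (dassoc_swap12 z y x). apply dassoc_cyc. Qed.

Lemma dassoc_central3 x y c : central c -> dassoc x y c = 1.
Proof. intro Hc. apply dassoc_eq1, (central_assoc3 Hc). Qed.

Lemma dassoc_xxy x y : dassoc x x y = 1.
Proof. apply dassoc_eq1. symmetry. apply mul_alt_l. Qed.

Lemma dassoc_yxx y x : dassoc y x x = 1.
Proof. apply dassoc_eq1, mul_alt_r. Qed.

Lemma mul_dassoc' x y z : x * (y * z) = ((x * y) * z) * dassoc x y z.
Proof.
  rewrite (mul_dassoc x y z), (central_assoc3 (central_dassoc x y z)), dassoc_sq, mulx1.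
  reflexivity.
Qed.

(* Three applications of moufang_factor rewrite (kx)^-1 (k(x(yz))) as
   h(y) ((kx) (k^-1 (x^-1 z))), which has the shape required by
   central_factor_multiplicative. *)
Lemma dassocM3 k x y z : dassoc k x (y * z) = dassoc k x y * dassoc k x z.
Proof.
  assert (Hl : forall m, (k * x)^-1 * (k * (x * m)) = m * dassoc k x m).
  { intro m. rewrite (mul_dassoc' k x m),
      <- (central_assoc3 (central_dassoc k x m) ((k * x)^-1)), mulKm.
    reflexivity. }
  assert (Hr : forall m, (k * x)^-1^-1 * (k^-1 * (x^-1 * m))
                         = m * (dcomm x k * dassoc k^-1 x^-1 m)).
  { intro m. rewrite invmK, (mul_dassoc' k^-1 x^-1 m), <- invmM, (mul_dcomm x k),
      <- (central_assoc3 (central_dassoc k^-1 x^-1 m) ((x * k) * dcomm x k)),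
      (central_mulAC (central_dcomm x k) (x * k)), mulVKm,
      <- (central_assoc3 (central_dassoc k^-1 x^-1 m) m (dcomm x k)).
    reflexivity. }
  apply (central_factor_multiplicative (dassoc k x)
           (fun m => dcomm x k * dassoc k^-1 x^-1 m)
           (fun m => ((k * x)^-1 * ((k * ((x * m) * x)) * k)) * (k * x)^-1)).
  - intro; apply central_dassoc.
  - intro; apply central_mul; [apply central_dcomm | apply central_dassoc].
  - apply dassoc_central3, central_one.
  - apply central_invol_mul; [apply central_invol_dcomm | apply central_invol_dassoc].
  - intros y' z'. rewrite <- Hl, <- Hr, (moufang_factor x y' z'),
      (moufang_factor k ((x * y') * x) (x^-1 * z')), (moufang_factor ((k * x)^-1)).
    reflexivity.
Qed.

Lemma dassocM2 x u v z : dassoc x (u * v) z = dassoc x u z * dassoc x v z.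
Proof.
  rewrite (dassoc_swap23 x (u * v) z), dassocM3, <- (dassoc_swap23 x u z),
    <- (dassoc_swap23 x v z).
  reflexivity.
Qed.

Lemma dassocM1 u v y z : dassoc (u * v) y z = dassoc u y z * dassoc v y z.
Proof.
  rewrite (dassoc_swap12 (u * v) y z), dassocM2, <- (dassoc_swap12 u y z),
    <- (dassoc_swap12 v y z).
  reflexivity.
Qed.

Lemma dassoc_central2 x m c z : central c -> dassoc x (m * c) z = dassoc x m z.
Proof.
  intro Hc. rewrite dassocM2, (dassoc_swap23 x c z), (dassoc_central3 _ _ _ Hc), mulx1.
  reflexivity.
Qed.

Lemma dassoc_central1 m c y z : central c -> dassoc (m * c) y z = dassoc m y z.
Proof.
  intro Hc. rewrite dassocM1, (dassoc_swap12 c y z), (dassoc_swap23 y c z),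
    (dassoc_central3 _ _ _ Hc), mulx1.
  reflexivity.
Qed.

Lemma dassoc_inv2 x y z : dassoc x y^-1 z = dassoc x y z.
Proof. rewrite (inv_sq y). apply dassoc_central2, central_sq_inv. Qed.

Lemma dassoc_inv1 x y z : dassoc x^-1 y z = dassoc x y z.
Proof. rewrite (inv_sq x). apply dassoc_central1, central_sq_inv. Qed.

Lemma inv_dassoc x y z : (dassoc x y z)^-1 = dassoc x y z.
Proof. symmetry. apply inv_uniq, dassoc_sq. Qed.

Lemma rdiv_mul_central m c z : central c -> rdiv (m * c) z = rdiv m z * c.
Proof. intro Hc. rewrite !rdivE, (central_mulAC Hc). reflexivity. Qed.

Lemma comm_dcomm x y : comm L x y = dcomm x y.
Proof.
  unfold comm. rewrite (inv_sq x), (inv_sq y),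
    <- (central_assoc3 (central_sq_inv y) (x * (x * x)^-1) y),
    (central_mulAC (central_sq_inv x) x y),
    (central_mulAC (central_sq_inv y) ((x * y) * (x * x)^-1) x),
    (central_mulAC (central_sq_inv x) (x * y) x),
    (central_mulAC (central_sq_inv y) (((x * y) * x) * (x * x)^-1) y),
    (central_mulAC (central_sq_inv x) ((x * y) * x) y),
    flexible_dcomm, (central_mulAC (central_dcomm x y) (y * (x * x)) y),
    (central_mulAC (central_sq x) y y),
    (central_mulAC (central_dcomm x y) ((y * y) * (x * x)) ((x * x)^-1)),
    (central_assoc3 (central_sq_inv x) (y * y) (x * x)), mulmV, mulx1,
    (central_mulAC (central_dcomm x y) (y * y) ((y * y)^-1)), mulmV, mul1x.
  reflexivity.
Qed.

Lemma assoc_dassoc x y z : assoc L x y z = dassoc x y z.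
Proof.
  unfold assoc. rewrite (mul_dassoc x y z), invmM, inv_dassoc,
    (central_assoc1 (central_dassoc x y z)), mulVm, mulx1.
  reflexivity.
Qed.

Lemma pcomm_RR x y w :
  pcomm L (R L x) (Rinv L x) (R L y) (Rinv L y) w = w * comm L x y.
Proof.
  unfold pcomm, seqc, R, Rinv.
  rewrite (mul_swap_r _ y x), !mul_rdiv, comm_dcomm, dcommC.
  reflexivity.
Qed.

Lemma pcomm_RL x y w :
  pcomm L (R L x) (Rinv L x) (Lm L y) (Linv L y) w = w * dassoc y w x.
Proof.
  unfold pcomm, seqc, R, Rinv, Lm, Linv.
  rewrite mul_dassoc', mul_ldiv, mul_rdiv, ldivE, rdivE, !dassocM2, !dassoc_inv2,
    dassoc_xxy, dassoc_yxx, mul1x, mulx1.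
  reflexivity.
Qed.

Lemma pcomm_LR x y w :
  pcomm L (Lm L y) (Linv L y) (R L x) (Rinv L x) w = w * dassoc y w x.
Proof.
  unfold pcomm, seqc, R, Rinv, Lm, Linv.
  rewrite mul_dassoc, mul_rdiv, mul_ldiv, rdivE, ldivE, !dassocM2, !dassoc_inv2,
    dassoc_xxy, dassoc_yxx, mul1x, mulx1.
  reflexivity.
Qed.

Lemma Rxy_inv y z w : Rxy L y^-1 z w = w * dassoc w y z.
Proof.
  unfold Rxy, seqc, R, Rinv.
  rewrite (mul_dassoc w y^-1 z), rdivE, (central_mulAC (central_dassoc w y^-1 z)),
    mulmK, dassoc_inv2.
  reflexivity.
Qed.

Lemma Lxy_inv y z w : Lxy L y z^-1 w = w * dassoc z y w.
Proof.
  unfold Lxy, seqc, Lm, Linv.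
  rewrite (mul_dassoc' z^-1 y w), ldivE,
    <- (central_assoc3 (central_dassoc z^-1 y w) ((z^-1 * y)^-1)), mulKm, dassoc_inv1.
  reflexivity.
Qed.

Lemma pcomm_pcomm_R x y z w :
  pcomm L (pcomm L (R L x) (Rinv L x) (Lm L y) (Linv L y))
          (pcomm L (Lm L y) (Linv L y) (R L x) (Rinv L x))
          (R L z) (Rinv L z) w
  = w * dassoc x y z.
Proof.
  (* With c := (y,w,x): the inner maps contribute c and (y,w/z,x) = c (y,z,x),
     and c c = 1. *)
  rewrite pcommE, pcomm_LR.
  change (pcomm L (R L x) (Rinv L x) (Lm L y) (Linv L y) (rdiv (w * dassoc y w x) z) * z
          = w * dassoc x y z).
  rewrite pcomm_RL, (rdiv_mul_central _ _ _ (central_dassoc y w x)),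
    (dassoc_central2 _ _ _ _ (central_dassoc y w x)),
    (central_mulAC (central_dassoc y (rdiv w z) x)), (central_mulAC (central_dassoc y w x)),
    mul_rdiv, rdivE, dassocM2, dassoc_inv2,
    (central_assoc3 (central_mul _ _ (central_dassoc y w x) (central_dassoc y z x))),
    <- (central_assoc1 (central_dassoc y w x)), dassoc_sq, mul1x, (dassoc_cyc x y z).
  reflexivity.
Qed.

End CentralSquares.
End Moufang.
End Loop.

Theorem mainTheorem8 (L : loop) :
  moufang L ->
  (forall x : L, in_center L (mul x x)) ->
  forall x y z : L,
    (* (i) [R_x, R_y] = R_{[x,y]} *)
    (forall w : L,
        pcomm L (R L x) (Rinv L x) (R L y) (Rinv L y) w = R L (comm L x y) w) /\
    (* (ii) [R_y, L_z] = R_{y^{-1}, z} = L_{y, z^{-1}} *)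
    (forall w : L,
        pcomm L (R L y) (Rinv L y) (Lm L z) (Linv L z) w = Rxy L (linv L y) z w /\
        Rxy L (linv L y) z w = Lxy L y (linv L z) w) /\
    (* (iii) [[R_x, L_y], R_z] = R_{(x,y,z)} *)
    (forall w : L,
        pcomm L (pcomm L (R L x) (Rinv L x) (Lm L y) (Linv L y))
                (pcomm L (Lm L y) (Linv L y) (R L x) (Rinv L x))
                (R L z) (Rinv L z) w
        = R L (assoc L x y z) w).
Proof.
  intros moufangL sq_central x y z.
  split; [| split]; intro w.
  - apply pcomm_RR; assumption.
  - rewrite pcomm_RL, Rxy_inv, Lxy_inv, (dassoc_swap23 L moufangL sq_central z y w),
      (dassoc_cyc L moufangL sq_central z w y) by assumption.
    split; reflexivity.
  - rewrite pcomm_pcomm_R, <- assoc_dassoc by assumption.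
    reflexivity.
Qed.
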